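(* Let $\mathcal V$ be a finite-dimensional vector space over $\mathbb K\in\{\mathbb R,\mathbb C\}$ with norm $\|\cdot\|$, dual space $\mathcal V^\star$, dual norm $\|\cdot\|_\star$, and $\mathrm d_\star(x,y)=\frac12\|x-y\|_\star$. Let $\epsilon,\tau>0$, $z\in\mathcal V^\star$ and $\mu$ a probability measure over $\mathcal V^\star$. Then for every $x\in\mathcal V^\star$, $$\Pr_{y\sim\mu}[\mathrm d_\star(x,y)<\epsilon]\le\max\left\{\mathrm{frac}(\mu,z,\tau),\ \Pr_{y\sim\mu}\left[\mathrm d_\star(y,z)<2\epsilon+\tfrac\tau2\right]\right\},$$ where $\mathrm{frac}(\mu,z,\tau)=\sup_{v\in\overline B_1(0)}\Pr_{y\sim\mu}[|y(v)-z(v)|>\tau]$.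
   Context: $\overline B_1(0)=\{v\in\mathcal V:\|v\|\le1\}$ and $\|x\|_\star=\sup_{\|v\|\le1}|x(v)|$; elements of $\mathcal V^\star$ are evaluated on vectors $v\in\mathcal V$ as linear functionals. *)

From HB Require Import structures.
From mathcomp Require Import all_boot all_order all_algebra.
From mathcomp Require Import all_classical all_reals all_analysis.
From mathcomp Require Import complex.
Set Implicit Arguments.
Unset Strict Implicit.
Unset Printing Implicit Defensive.
Import Order.TTheory GRing.Theory Num.Theory.
Local Open Scope classical_set_scope.
Local Open Scope ring_scope.

(* Setting: V is an n-dimensional vector space over K, modelled as 'rV[K]_n
   (every finite-dimensional K-space is isomorphic to some K^n, and the norm
   on V is arbitrary).  absK : K -> R is the modulus of the scalar field
   (instantiated by `|.| for K = R and by normc for K = C). *)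

Section DualSetting.
Variables (R : realType) (K : pzRingType) (absK : K -> R) (n : nat).

Definition is_norm (N : 'rV[K]_n -> R) : Prop :=
  [/\ forall v, N v = 0 -> v = 0,
      forall (a : K) v, N (a *: v) = absK a * N v &
      forall u v, N (u + v) <= N u + N v].

Definition is_functional (f : 'rV[K]_n -> K) : Prop :=
  forall (a : K) u v, f (a *: u + v) = a * f u + f v.

Lemma functional0 : is_functional (fun _ => 0).
Proof. by move=> a u v; rewrite mulr0 addr0. Qed.

Definition dual := {f : 'rV[K]_n -> K | is_functional f}.

HB.instance Definition _ := gen_eqMixin dual.
HB.instance Definition _ := gen_choiceMixin dual.
HB.instance Definition _ := isPointed.Build dual (exist _ _ functional0).

Definition ev (x : dual) (v : 'rV[K]_n) : K := proj1_sig x v.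

Variable N : 'rV[K]_n -> R.

Definition unit_ball : set 'rV[K]_n := [set v | N v <= 1].

Definition dual_norm_diff (x y : dual) : R :=
  sup [set absK (ev x v - ev y v) | v in unit_ball].

Definition dstar (x y : dual) : R := dual_norm_diff x y / 2.

Definition dual_open (A : set dual) : Prop :=
  forall x, A x -> exists2 r : R, 0 < r &
    forall y, dual_norm_diff x y < r -> A y.

Definition dualBorel := g_sigma_algebraType dual_open.

Definition frac (mu : probability dualBorel R) (z : dual) (tau : R) : \bar R :=
  ereal_sup [set mu [set y : dualBorel | tau < absK (ev y v - ev z v)]
            | v in unit_ball].

End DualSetting.

Definition claim (R : realType) (K : pzRingType) (absK : K -> R) (n : nat) : Prop :=
  forall (N : 'rV[K]_n -> R), is_norm absK N ->
  forall (eps tau : R), 0 < eps -> 0 < tau ->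
  forall (z : dual K n) (mu : probability (dualBorel absK N) R) (x : dual K n),
    (mu [set y : dualBorel absK N | (dstar absK N x y < eps)%R]
      <= maxe (frac mu z tau)
              (mu [set y : dualBorel absK N |
                     (dstar absK N y z < 2 * eps + tau / 2)%R]))%E.

(* If d_*(x, z) <= eps + tau/2, the triangle inequality puts the ball
   {y | d_*(x, y) < eps} inside {y | d_*(y, z) < 2 eps + tau/2}.  Otherwise
   ||x - z||_* > 2 eps + tau, so some v in the unit ball has
   |x(v) - z(v)| > 2 eps + tau, and every y of the ball then has
   |y(v) - z(v)| > tau: the ball has mass at most frac(mu, z, tau).
   The only analytic input is that the supremum defining ||.||_* is finite.
   It follows from the equivalence of norms on R^m (compactness of the unit
   sphere of the sup norm), C^n being viewed as R^(2n). *)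

From Pilot Require Import Defs.
From HB Require Import structures.
From mathcomp Require Import all_boot all_order all_algebra.
From mathcomp Require Import all_classical all_reals all_analysis.
From mathcomp Require Import complex.
From mathcomp Require Import lra.
Set Implicit Arguments.
Unset Strict Implicit.
Unset Printing Implicit Defensive.
Import Order.TTheory GRing.Theory Num.Theory.
Local Open Scope classical_set_scope.
Local Open Scope ring_scope.

Section AbsoluteValue.
Variables (R : realType) (K : pzRingType) (absK : K -> R).
Hypothesis absK0 : absK 0 = 0.
Hypothesis absKN : forall a, absK (- a) = absK a.
Hypothesis absKD : forall a b, absK (a + b) <= absK a + absK b.

Lemma absK_ge0 a : 0 <= absK a.
Proof.
have : absK 0 <= absK a + absK (- a) by rewrite -(subrr a) absKD.
rewrite absK0 absKN; lra.
Qed.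

Lemma absK_sum (I : Type) (r : seq I) (F : I -> K) :
  absK (\sum_(i <- r) F i) <= \sum_(i <- r) absK (F i).
Proof.
elim/big_rec2: _ => [|i y1 y2 _ IH]; first by rewrite absK0.
by apply: le_trans (absKD _ _) _; rewrite lerD2l.
Qed.

Lemma absKB_le a b c : absK (a - c) <= absK (a - b) + absK (b - c).
Proof. by apply: le_trans (absKD _ _); rewrite addrA subrK. Qed.

Variables (n : nat) (N : 'rV[K]_n -> R).
Hypothesis N_norm : is_norm absK N.

Lemma is_norm0 : N 0 = 0.
Proof. by case: N_norm => _ NZ _; rewrite -(scale0r (0 : 'rV[K]_n)) NZ absK0 mul0r. Qed.

Lemma is_normN v : N (- v) = N v.
Proof. by case: N_norm => _ NZ _; rewrite -scaleN1r NZ absKN -NZ scale1r. Qed.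

Lemma is_norm_ge0 v : 0 <= N v.
Proof.
case: N_norm => _ _ ND.
have : N 0 <= N v + N (- v) by rewrite -(subrr v) ND.
rewrite is_norm0 is_normN; lra.
Qed.

End AbsoluteValue.

Section Functionals.
Variables (K : pzRingType) (n : nat) (f : dual K n).

Lemma ev0 : ev f 0 = 0.
Proof.
case: f => g g_lin; rewrite /ev /=.
have := g_lin 1 0 0; rewrite scale1r addr0 mul1r => /(congr1 (fun t => t - g 0)).
by rewrite addrK subrr.
Qed.

Lemma evD u v : ev f (u + v) = ev f u + ev f v.
Proof. by rewrite /ev; case: f => g g_lin /=; rewrite -[g u]mul1r -g_lin scale1r. Qed.

Lemma evZ a u : ev f (a *: u) = a * ev f u.
Proof.
rewrite -[a *: u]addr0 -[RHS]addr0 -ev0 /ev.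
by case: f => g g_lin /=; rewrite g_lin.
Qed.

End Functionals.

Section DualDistance.
Variables (R : realType) (K : pzRingType) (absK : K -> R) (n : nat).
Hypothesis absK0 : absK 0 = 0.
Hypothesis absKN : forall a, absK (- a) = absK a.
Hypothesis absKD : forall a b, absK (a + b) <= absK a + absK b.
Hypothesis absKM : forall a b, absK (a * b) = absK a * absK b.
Variable N : 'rV[K]_n -> R.
Hypothesis N_norm : is_norm absK N.
Hypothesis N_ge_coord : exists2 c, 0 < c & forall (v : 'rV[K]_n) i, c * absK (v ord0 i) <= N v.

Local Notation D := (dual_norm_diff absK N).

Lemma ev_bounded (f : dual K n) : exists B, forall v, absK (ev f v) <= B * N v.
Proof.
have [c c_gt0 Nc] := N_ge_coord.
exists ((\sum_(i < n) absK (ev f (delta_mx 0 i))) / c) => v.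
have -> : ev f v = \sum_(j < n) v 0 j * ev f (delta_mx 0 j).
  rewrite {1}(row_sum_delta v).
  by elim/big_rec2: _ => [|j y1 y2 _ <-]; rewrite ?ev0 // evD evZ.
apply: le_trans (absK_sum absK0 absKD _ _) _.
rewrite mulrAC !mulr_suml; apply: ler_sum => j _.
rewrite absKM mulrC -mulrA ler_wpM2l ?(absK_ge0 absK0 absKN absKD) //.
by rewrite ler_pdivlMr // mulrC.
Qed.

Lemma dual_norm_diff_has_sup x y :
  has_sup [set absK (ev x v - ev y v) | v in unit_ball N].
Proof.
split; first by exists (absK (ev x 0 - ev y 0)), 0; rewrite // /unit_ball /= (is_norm0 absK0).
have [Bx Nx] := ev_bounded x; have [By Ny] := ev_bounded y.
exists (`|Bx| + `|By|) => _ [v v1 <-].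
apply: le_trans (absKD _ _) _; rewrite absKN.
have N_ge0 := is_norm_ge0 absK0 absKN N_norm v.
by apply: lerD; [apply: le_trans (Nx v) _ | apply: le_trans (Ny v) _];
  apply: le_trans (ler_wpM2r N_ge0 (ler_norm _)) _; exact: ler_piMr.
Qed.

Lemma ev_le_dual_norm_diff x y v : unit_ball N v -> absK (ev x v - ev y v) <= D x y.
Proof. by move=> v1; apply: sup_upper_bound (dual_norm_diff_has_sup x y) _ _; exists v. Qed.

Lemma dual_norm_diff_le x y r :
  (forall v, unit_ball N v -> absK (ev x v - ev y v) <= r) -> D x y <= r.
Proof.
move=> r_ub; apply: ge_sup; first by case: (dual_norm_diff_has_sup x y).
by move=> _ [v v1 <-]; exact: r_ub.
Qed.

Lemma dual_norm_diff_gt x y r :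
  r < D x y -> exists2 v, unit_ball N v & r < absK (ev x v - ev y v).
Proof.
case: (dual_norm_diff_has_sup x y) => S0 _ /(sup_gt S0)[_ [v v1 <-]].
by exists v.
Qed.

Lemma dual_norm_diffC x y : D x y = D y x.
Proof.
by apply/eqP; rewrite eq_le; apply/andP; split; apply: dual_norm_diff_le => v v1;
  rewrite -absKN opprB ev_le_dual_norm_diff.
Qed.

Lemma dual_norm_diff_triangle x y z : D x z <= D x y + D y z.
Proof.
apply: dual_norm_diff_le => v v1; apply: le_trans (absKB_le absKD _ (ev y v) _) _.
by apply: lerD; apply: ev_le_dual_norm_diff.
Qed.

Lemma dual_norm_diff_ge0 x y : 0 <= D x y.
Proof.
apply: le_trans (absK_ge0 absK0 absKN absKD (ev x 0 - ev y 0)) _.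
by apply: ev_le_dual_norm_diff; rewrite /unit_ball /= (is_norm0 absK0).
Qed.

Lemma dual_open_lt (f : dual K n -> R) r :
  (forall y y', f y' <= f y + D y y') -> dual_open absK N [set y | f y < r].
Proof.
move=> f_lip y /= fy; exists (r - f y) => [|y' Dyy']; first by rewrite subr_gt0.
have := f_lip y y'; lra.
Qed.

Lemma dual_open_gt (f : dual K n -> R) r :
  (forall y y', f y <= f y' + D y y') -> dual_open absK N [set y | r < f y].
Proof.
move=> f_lip y /= fy; exists (f y - r) => [|y' Dyy']; first by rewrite subr_gt0.
have := f_lip y y'; lra.
Qed.

Lemma dual_open_measurable (A : set (dualBorel absK N)) :
  dual_open absK N A -> measurable A.
Proof. exact: sub_sigma_algebra. Qed.

Local Notation dstar := (dstar absK N).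

Lemma dstar_ball_le_max (eps tau : R) (z x : dual K n)
    (mu : probability (dualBorel absK N) R) :
  (mu [set y : dualBorel absK N | (dstar x y < eps)%R]
    <= maxe (Defs.frac mu z tau)
            (mu [set y : dualBorel absK N | (dstar y z < 2 * eps + tau / 2)%R]))%E.
Proof.
have D_ge0 := dual_norm_diff_ge0.
have D_tri := dual_norm_diff_triangle.
have ball_measurable : measurable [set y : dualBorel absK N | dstar x y < eps].
  apply: dual_open_measurable; apply: dual_open_lt => y y'.
  have := D_tri x y y'; have := D_ge0 y y'; rewrite /Defs.dstar; lra.
rewrite le_max; have [Dxz_le|Dxz_gt] := leP (D x z) (2 * eps + tau).
  apply/orP; right; apply: le_measure; rewrite ?inE //.
    apply: dual_open_measurable; apply: dual_open_lt => y y'.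
    have := D_tri y' y z; have := D_ge0 y y'; rewrite [D y' y]dual_norm_diffC /Defs.dstar.
    lra.
  move=> y /=; have := D_tri y x z; rewrite [D y x]dual_norm_diffC /Defs.dstar; lra.
apply/orP; left; have [v v1 xz_gt] := dual_norm_diff_gt Dxz_gt.
apply: (@le_trans _ _ (mu [set y : dualBorel absK N | tau < absK (ev y v - ev z v)])).
  apply: le_measure; rewrite ?inE //.
    apply: dual_open_measurable; apply: dual_open_gt => y y'.
    have := ev_le_dual_norm_diff y y' v1; have := absKB_le absKD (ev y v) (ev y' v) (ev z v).
    lra.
  move=> y /=; have := ev_le_dual_norm_diff x y v1.
  have := absKB_le absKD (ev x v) (ev y v) (ev z v); rewrite /Defs.dstar; lra.
by apply: ereal_sup_ubound; exists v.
Qed.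

End DualDistance.

Import numFieldNormedType.Exports.

Lemma mx_norm_ge_entry (K : realDomainType) (m n : nat) (x : 'M[K]_(m, n)) i j :
  `|x i j| <= `|x|.
Proof.
have /mapP[ij _ ->] : `|x i j| \in [seq `|x ij.1 ij.2| | ij : 'I_m * 'I_n].
  by apply/mapP; exists (i, j); rewrite ?mem_enum.
by rewrite [leRHS]/Num.norm /= mx_normrE; apply/bigmax_geP; right; exists ij.
Qed.

Section RealNormEquivalence.
Variables (R : realType) (m : nat) (M : 'rV[R]_m -> R).
Hypothesis M_norm : is_norm (fun a : R => `|a|) M.

Let M0 := is_norm0 (normr0 R) M_norm.
Let M_ge0 := is_norm_ge0 (normr0 R) (@normrN _ R) M_norm.

Lemma is_norm_le_mx_norm : exists2 L, 0 < L & forall v, M v <= L * `|v|.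
Proof.
case: M_norm => _ MZ MD.
exists (\sum_(i < m) M (delta_mx 0 i) + 1) => [|v].
  by rewrite ltr_wpDl // sumr_ge0.
rewrite mulrDl mul1r ler_wpDr // {1}(row_sum_delta v) mulr_suml.
elim/big_rec2: _ => [|j y1 y2 _ IH]; first by rewrite M0.
apply: le_trans (MD _ _) _; apply: lerD => //.
by rewrite MZ mulrC ler_wpM2l ?M_ge0 ?mx_norm_ge_entry.
Qed.

Lemma is_norm_continuous : continuous M.
Proof.
have [L L_gt0 ML] := is_norm_le_mx_norm; case: M_norm => _ MZ MD.
have MN := is_normN (@normrN _ R) M_norm.
move=> x; apply/(@cvgrPdist_lt _ _ _ (nbhs x) (nbhs_filter x)) => e e_gt0.
apply/nbhs_ballP; exists (e / L); first by rewrite /= divr_gt0.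
move=> u; rewrite -ball_normE /= => xu_small.
have := MD u (x - u); have := MD x (u - x); rewrite !subrKC -opprB MN.
have := ML (x - u); have : L * `|x - u| < e by rewrite mulrC -ltr_pdivlMr.
rewrite ltr_norml; lra.
Qed.

Lemma is_norm_ge_mx_norm : exists2 c, 0 < c & forall v, c * `|v| <= M v.
Proof.
case: M_norm => M_eq0 MZ _.
have [[w w_neq0]|all0] := pselect (exists v : 'rV[R]_m, v != 0); last first.
  exists 1 => // v; have -> : v = 0 by apply: contra_notP all0 => ?; exists v; apply/eqP.
  by rewrite normr0 mulr0 M0.
pose S := [set v : 'rV[R]_m | `|v| = 1].
have normalize v : v != 0 -> S (`|v|^-1 *: v).
  by move=> v_neq0; rewrite /S /= normrZ normfV normr_id mulVf ?normr_eq0.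
have S_compact : compact S.
  apply: bounded_closed_compact; first by exists 1; split => // r r1 v /= ->; exact: ltW.
  apply: (@closed_comp _ _ _ [set 1 : R]); last exact: closed_eq.
  by move=> v _; apply: norm_continuous.
have [v0 /set_mem S_v0 v0_min] := compact_EVT_min (ex_intro _ _ (normalize w w_neq0))
  S_compact (continuous_subspaceT is_norm_continuous).
have Mv0_gt0 : 0 < M v0.
  rewrite lt_neqAle M_ge0 andbT; apply/eqP => /esym /M_eq0 v0_eq0.
  by move: S_v0; rewrite /S /= v0_eq0 normr0 => /eqP; rewrite eq_sym oner_eq0.
exists (M v0) => // v; have [->|v_neq0] := eqVneq v 0; first by rewrite normr0 mulr0 M0.
have := v0_min _ (mem_set (normalize v v_neq0)).
by rewrite MZ normfV normr_id ler_pdivlMl ?normr_gt0 // mulrC.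
Qed.

End RealNormEquivalence.

Lemma real_norm_ge_coord (R : realType) (n : nat) (N : 'rV[R]_n -> R) :
  is_norm (fun a : R => `|a|) N ->
  exists2 c, 0 < c & forall (v : 'rV[R]_n) i, c * `|v ord0 i| <= N v.
Proof.
move=> N_norm; have [c c_gt0 Nc] := is_norm_ge_mx_norm N_norm.
exists c => // v i; apply: le_trans (Nc v).
by rewrite ler_wpM2l ?mx_norm_ge_entry // ltW.
Qed.

Section ComplexRows.
Variables (R : realType) (n : nat).
Local Open Scope complex_scope.

Definition complex_row (w : 'rV[R]_(n + n)) : 'rV[R[i]]_n :=
  \row_j (w 0 (lshift n j) +i* w 0 (rshift n j)).

Lemma complex_rowD u v : complex_row (u + v) = complex_row u + complex_row v.
Proof. by apply/rowP => j; rewrite !mxE. Qed.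

Lemma complex_rowZ (a : R) u : complex_row (a *: u) = a%:C *: complex_row u.
Proof. by apply/rowP => j; rewrite !mxE /GRing.mul /= !mul0r subr0 addr0. Qed.

Lemma complex_row_eq0 w : complex_row w = 0 -> w = 0.
Proof.
move=> /rowP w0; apply/rowP => k; rewrite mxE.
by case: (split_ordP k) => j ->; have := w0 j; rewrite !mxE => -[].
Qed.

Lemma complex_row_ReIm (v : 'rV[R[i]]_n) :
  complex_row (row_mx (\row_j complex.Re (v 0 j)) (\row_j complex.Im (v 0 j))) = v.
Proof. by apply/rowP => j; rewrite mxE row_mxEl row_mxEr !mxE; case: (v 0 j). Qed.

Lemma normc_real (a : R) : Normc.normc a%:C = `|a|.
Proof. by change (Num.sqrt (a ^+ 2 + 0 ^+ 2) = `|a|); rewrite expr0n addr0 sqrtr_sqr. Qed.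

Lemma normc_le_ReIm (a b : R) : Normc.normc (a +i* b) <= `|a| + `|b|.
Proof.
change (Num.sqrt (a ^+ 2 + b ^+ 2) <= `|a| + `|b|).
rewrite -[leRHS]ger0_norm ?addr_ge0 // -sqrtr_sqr ler_wsqrtr //.
rewrite sqrrD (real_normK (num_real a)) (real_normK (num_real b)).
by rewrite -addrA lerD2l lerDr mulrn_wge0 ?mulr_ge0.
Qed.

End ComplexRows.

Lemma complex_norm_ge_coord (R : realType) (n : nat) (N : 'rV[R[i]]_n -> R) :
  is_norm (@Normc.normc R) N ->
  exists2 c, 0 < c & forall (v : 'rV[R[i]]_n) i, c * Normc.normc (v ord0 i) <= N v.
Proof.
case=> N_eq0 NZ ND.
have M_norm : is_norm (fun a : R => `|a|) (N \o @complex_row R n).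
  split=> [w /N_eq0 /complex_row_eq0 //|a w|u w] /=.
    by rewrite complex_rowZ NZ normc_real.
  by rewrite complex_rowD ND.
have [c c_gt0 Nc] := is_norm_ge_mx_norm M_norm.
exists (c / 2) => [|v i]; first by rewrite divr_gt0.
pose w := row_mx (\row_j complex.Re (v 0 j)) (\row_j complex.Im (v 0 j)).
have := Nc w; rewrite /= complex_row_ReIm.
have := mx_norm_ge_entry w 0 (lshift n i); have := mx_norm_ge_entry w 0 (rshift n i).
have : Normc.normc (v ord0 i) <= `|w 0 (lshift n i)| + `|w 0 (rshift n i)|.
  by rewrite /w row_mxEl row_mxEr !mxE; case: (v ord0 i) => a b; exact: normc_le_ReIm.
nra.
Qed.

Theorem mainTheorem7 (R : realType) (n : nat) :
  claim (fun a : R => `|a|) n /\ claim (@Normc.normc R) n.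
Proof.
split=> N N_norm eps tau _ _ z mu x; apply: dstar_ball_le_max.
- exact: normr0.
- exact: normrN.
- exact: ler_normD.
- exact: normrM.
- exact: N_norm.
- exact: real_norm_ge_coord.
- exact: Normc.normc0.
- exact: normcN.
- exact: le_normcD.
- exact: Normc.normcM.
- exact: N_norm.
- exact: complex_norm_ge_coord.
Qed.
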